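(* Let $p\geq5$ be a prime, $q$ a power of $p$, $m\geq1$, and let $\mathcal{S}$ be the Sylow $p$-subgroup of $\mathrm{U}_{2m+1}(\mathbb{F}_q)$ consisting of its lower unitriangular matrices. Then $\mathfrak{X}(\mathcal{S})=\mathcal{S}$.
   Context: $\overline{x}=x^q$ on $\mathbb{F}_{q^2}$; $Q_{2m+1}$ is the $(2m+1)\times(2m+1)$ matrix with $1$ on the skew-diagonal and $0$ elsewhere; $\mathrm{U}_{2m+1}(\mathbb{F}_q)=\{A\in\mathrm{GL}_{2m+1}(\mathbb{F}_{q^2}):\overline{A}^TQ_{2m+1}A=Q_{2m+1}\}$. Commutators: $[x,y]=x^{-1}y^{-1}xy$, $[X,Y;1]=[X,Y]$, $[X,Y;k]=[[X,Y;k-1],Y]$; $\Omega_1(H)$ is generated by the elements of order $p$ of $H$. For a finite $p$-group $S$, the Oliver subgroup $\mathfrak{X}(S)$ is the unique largest normal subgroup $K$ of $S$ admitting a chain $1=Q_0\leq\cdots\leq Q_k=K$ of normal subgroups of $S$ with $[\Omega_1(C_S(Q_{i-1})),Q_i;p-1]=1$ for all $1\le i\le k$. *)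

From HB Require Import structures.
From mathcomp Require Import all_boot all_order all_algebra all_fingroup all_solvable all_field.
Set Implicit Arguments. Unset Strict Implicit. Unset Printing Implicit Defensive.
Import GRing.Theory.

Local Open Scope group_scope.

Definition Omega1 (gT : finGroupType) (p : nat) (H : {set gT}) : {set gT} :=
  <<[set x in H | #[x] == p]>>.

Definition comm_iter (gT : finGroupType) (X Y : {set gT}) (k : nat) : {set gT} :=
  iter k (fun Z => [~: Z, Y]) X.

Definition oliver_admissible (gT : finGroupType) (p : nat) (S K : {set gT}) : Prop :=
  exists (k : nat) (Q : nat -> {group gT}),
    [/\ (Q 0 :=: 1)%g, Q k :=: K,
        (forall i, (i < k)%N -> Q i \subset Q i.+1),
        (forall i, (i <= k)%N -> Q i <| S) &
        (forall i, (1 <= i <= k)%N ->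
           (comm_iter (Omega1 p 'C_S(Q i.-1)) (Q i) p.-1 = 1)%g)].

(* K is the Oliver subgroup X(S): the unique largest normal subgroup of S
   admitting such a chain. *)
Definition is_oliver_subgroup (gT : finGroupType) (p : nat) (S K : {set gT}) : Prop :=
  [/\ K <| S, oliver_admissible p S K &
      forall K' : {group gT}, K' <| S -> oliver_admissible p S K' -> K' \subset K].

Local Open Scope ring_scope.

Definition skewQ (F : ringType) (n : nat) : 'M[F]_n :=
  \matrix_(i < n, j < n) ((i + j == n.-1)%N)%:R.

Definition unitary_mx (F : fieldType) (q n : nat) (A : 'M[F]_n) : bool :=
  ((map_mx (fun x => x ^+ q) A)^T *m skewQ F n *m A == skewQ F n).

Definition lower_unitri (F : ringType) (n : nat) (A : 'M[F]_n) : bool :=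
  [forall i : 'I_n, forall j : 'I_n,
     ((i < j)%N ==> (A i j == 0)) && ((i == j) ==> (A i j == 1))].

Definition lower_unitri_unitary (F : finFieldType) (q n : nat) : {set {'GL_n.+1[F]}} :=
  [set g : {'GL_n.+1[F]} | unitary_mx q (GLval g) && lower_unitri (GLval g)].

From HB Require Import structures.
From mathcomp Require Import all_boot all_order all_algebra all_fingroup all_solvable all_field.
From mathcomp Require Import ring zify.
Set Implicit Arguments. Unset Strict Implicit. Unset Printing Implicit Defensive.
Import GRing.Theory.

(* Write N = 2m + 1 and let H be the subgroup of S of the matrices that differ
   from 1 only in their first column and last row.  H is normal in S, and the
   commutator of two elements of H is 1 + c E, where E is the matrix unit of the
   bottom-left corner; such elements are central in S.  Testing an element X of
   S against the elements 1 + a E_(r,1) - a^q E_(N,N+1-r) (+ a corner term) of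
   H shows that X centralises H only if X = 1 + c E, because a^q differs from a
   for some a.  Hence 1 <= H <= S is an Oliver chain: three commutators with H
   kill Omega_1(S), one commutator with S kills C_S(H), and p - 1 >= 3. *)

Section OliverCriterion.
Local Open Scope group_scope.
Variables (gT : finGroupType) (p : nat).
Implicit Types (X Y : {set gT}) (G S A : {group gT}).

Lemma Omega1_sub G : Omega1 p G \subset G.
Proof. by rewrite gen_subG; apply/subsetP => x /setIdP[]. Qed.

Lemma comm_iter_sub1 X Y k d :
  comm_iter X Y k \subset [1] -> comm_iter X Y (d + k) \subset [1].
Proof.
move=> trivXY; elim: d => // d IHd.
by rewrite addSn /comm_iter iterS (subset_trans (commSg Y IHd)) // comm1G.
Qed.

Lemma comm_iter_eq1 X Y k k' : (0 < k')%N -> (k <= k')%N ->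
  comm_iter X Y k \subset [1] -> comm_iter X Y k' = 1.
Proof.
move=> k'_gt0 le_kk' /(comm_iter_sub1 (k' - k)); rewrite subnK //.
by case: k' k'_gt0 {le_kk'} => // k' _; rewrite /comm_iter iterS => /trivgP.
Qed.

(* Witnessed by the chain 1 <= A <= S. *)
Lemma oliver_subgroup_self S A : (3 <= p.-1)%N -> A <| S ->
  [~: A, A] \subset 'C(S) -> 'C_S(A) \subset 'C(S) -> is_oliver_subgroup p S S.
Proof.
move=> p3 nsAS sAA_ZS sCA_ZS; have [sAS nAS] := andP nsAS.
have p1_gt0 : (0 < p.-1)%N := leq_trans (isT : 0 < 3)%N p3.
split=> [||K nsKS _]; [exact: normal_refl | | exact: normal_sub nsKS].
exists 2, (fun i => if i is 0 then 1%G else if i is 1 then A else S).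
split=> //; first by case=> [|[]] //= _; rewrite sub1G.
  by case=> [|[|[]]] //= _; rewrite ?normal1 ?normal_refl.
case=> [|[|[]]] //= _.
- apply: (comm_iter_eq1 (k := 3) p1_gt0 p3).
  have sOA_A : [~: Omega1 p 'C_S(1), A] \subset A.
    by rewrite commg_subr (subset_trans (Omega1_sub _)) // subIset ?nAS.
  rewrite /comm_iter /=.
  apply: subset_trans (commSg A (subset_trans (commSg A sOA_A) sAA_ZS)) _.
  by rewrite (commG1P (centS sAS)).
- apply: (comm_iter_eq1 (k := 1) p1_gt0 p1_gt0).
  rewrite /comm_iter /=; apply: subset_trans (commSg S (subset_trans (Omega1_sub _) sCA_ZS)) _.
  by rewrite (commG1P (subxx _)).
Qed.

End OliverCriterion.

Local Open Scope ring_scope.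

Lemma ord_neq_max_lt n (k : 'I_n.+1) : k != ord_max -> (k < n)%N.
Proof.
move=> neq_k; rewrite ltn_neqAle -ltnS ltn_ord andbT.
by apply: contra neq_k => /eqP k_n; apply/eqP/val_inj.
Qed.

Lemma ord_neq0_gt0 n (k : 'I_n.+1) : k != ord0 -> (0 < k)%N.
Proof. by move=> neq_k; rewrite lt0n; apply: contra neq_k => /eqP k0; apply/eqP/val_inj. Qed.

Section EntriesDelta.
Variable R : nzRingType.

Lemma mul_mx_deltaE m k p (M : 'M[R]_(m, k)) (x : 'I_k) (y : 'I_p) i j :
  (M *m delta_mx x y) i j = M i x * (j == y)%:R.
Proof.
rewrite mxE (bigD1 x) //= big1 ?addr0 => [|l /negPf nlx]; first by rewrite mxE eqxx.
by rewrite mxE nlx mulr0.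
Qed.

Lemma mul_delta_mxE m k p (x : 'I_m) (y : 'I_k) (M : 'M[R]_(k, p)) i j :
  (delta_mx x y *m M) i j = (i == x)%:R * M y j.
Proof.
rewrite mxE (bigD1 y) //= big1 ?addr0 => [|l /negPf nly]; first by rewrite mxE eqxx andbT.
by rewrite mxE nly andbF mul0r.
Qed.

End EntriesDelta.

Section LowerUnitriangular.
Variables (R : nzRingType) (n : nat).
Implicit Types A B N : 'M[R]_n.+1.

Local Notation Plast := (delta_mx ord_max ord_max : 'M[R]_n.+1).
Local Notation Pfirst := (delta_mx ord0 ord0 : 'M[R]_n.+1).

Lemma lower_unitriP A :
  reflect ((forall i j : 'I_n.+1, (i < j)%N -> A i j = 0) /\ forall i, A i i = 1)
          (lower_unitri A).
Proof.
apply: (iffP forallP) => [lowA | [A0 A1] i].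
  split=> [i j lt_ij | i].
    by have /forallP/(_ j)/andP[/implyP/(_ lt_ij)/eqP] := lowA i.
  by have /forallP/(_ i)/andP[_ /implyP/(_ (eqxx i))/eqP] := lowA i.
apply/forallP => j; apply/andP.
by split; apply/implyP; [move/A0-> | move/eqP <-; rewrite A1].
Qed.

Lemma lower_unitri_upper A (i j : 'I_n.+1) : lower_unitri A -> (i < j)%N -> A i j = 0.
Proof. by case/lower_unitriP => A0 _; apply: A0. Qed.

Lemma lower_unitri_diag A i : lower_unitri A -> A i i = 1.
Proof. by case/lower_unitriP. Qed.

Lemma lower_unitri1 : lower_unitri (1%:M : 'M[R]_n.+1).
Proof.
apply/lower_unitriP; split=> [i j lt_ij | i]; rewrite mxE ?eqxx //.
by rewrite -val_eqE (ltn_eqF lt_ij).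
Qed.

Lemma lower_unitri_1D N :
  (forall i j : 'I_n.+1, (i <= j)%N -> N i j = 0) -> lower_unitri (1 + N).
Proof.
move=> N0; apply/lower_unitriP; split=> [i j lt_ij | i]; rewrite !mxE ?N0 ?eqxx ?addr0 //.
  by rewrite -val_eqE (ltn_eqF lt_ij).
exact: ltnW.
Qed.

Lemma lower_unitriM A B : lower_unitri A -> lower_unitri B -> lower_unitri (A *m B).
Proof.
move=> lowA lowB; apply/lower_unitriP; split=> [i j lt_ij | i]; rewrite mxE.
  apply: big1 => k _; have [lt_ik | le_ki] := ltnP i k.
    by rewrite (lower_unitri_upper lowA lt_ik) mul0r.
  by rewrite (lower_unitri_upper lowB (leq_ltn_trans le_ki lt_ij)) mulr0.
rewrite (bigD1 i) //= big1 => [|k neq_ki].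
  by rewrite !lower_unitri_diag ?mulr1 ?addr0.
have [lt_ik | lt_ki | /val_inj eq_ik] := ltngtP i k; last by rewrite eq_ik eqxx in neq_ki.
  by rewrite (lower_unitri_upper lowA lt_ik) mul0r.
by rewrite (lower_unitri_upper lowB lt_ki) mulr0.
Qed.

Lemma lower_unitri_mul_last A : lower_unitri A -> A *m Plast = Plast.
Proof.
move=> lowA; apply/matrixP => i j; rewrite mul_mx_deltaE mxE.
have [-> | neq_in] := eqVneq i ord_max; first by rewrite lower_unitri_diag ?mul1r.
by rewrite lower_unitri_upper ?mul0r ?ord_neq_max_lt.
Qed.

Lemma lower_unitri_first_mul A : lower_unitri A -> Pfirst *m A = Pfirst.
Proof.
move=> lowA; apply/matrixP => i j; rewrite mul_delta_mxE mxE.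
have [-> | neq_j0] := eqVneq j ord0; first by rewrite lower_unitri_diag ?mulr1 ?andbT.
by rewrite andbF lower_unitri_upper ?mulr0 ?ord_neq0_gt0.
Qed.

End LowerUnitriangular.

Lemma lower_unitri_unit (R : comUnitRingType) n (A : 'M[R]_n.+1) :
  lower_unitri A -> A \in unitmx.
Proof.
move=> lowA; rewrite unitmxE det_trig.
  by rewrite big1 ?unitr1 // => i _; rewrite lower_unitri_diag.
by apply/forallP => i; apply/forallP => j; apply/implyP => /(lower_unitri_upper lowA) ->.
Qed.

Section SkewDiagonal.
Variables (R : nzRingType) (n : nat).
Local Notation J := (skewQ R n.+1).

Lemma rev_ord_max : rev_ord (@ord_max n) = ord0.
Proof. by apply: val_inj; rewrite /= subnn. Qed.

Lemma addn_eq_rev_ord (i k : 'I_n.+1) : ((i + k)%N == n) = (i == rev_ord k).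
Proof. by rewrite -val_eqE /= subSS; apply/eqP/eqP; have := ltn_ord k; lia. Qed.

Lemma skewQ_mul_delta (i j : 'I_n.+1) : J *m delta_mx i j = delta_mx (rev_ord i) j.
Proof. by apply/matrixP => a b; rewrite mul_mx_deltaE !mxE addn_eq_rev_ord -natrM mulnb. Qed.

Lemma delta_mul_skewQ (i j : 'I_n.+1) : delta_mx i j *m J = delta_mx i (rev_ord j).
Proof.
by apply/matrixP => a b; rewrite mul_delta_mxE !mxE addnC addn_eq_rev_ord -natrM mulnb.
Qed.

End SkewDiagonal.

Section Hook.
Variables (R : comNzRingType) (n : nat).
Implicit Types M N X Y C : 'M[R]_n.+1.

Local Notation Plast := (delta_mx ord_max ord_max : 'M[R]_n.+1).
Local Notation Pfirst := (delta_mx ord0 ord0 : 'M[R]_n.+1).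
Local Notation corner C := (Plast *m C *m Pfirst).

(* [N] vanishes outside its first column and its last row: the projections
   [1 - Plast] and [1 - Pfirst] discard the last row and the first column. *)
Definition hook_mx N := (1 - Plast) *m N *m (1 - Pfirst) == 0.

Lemma hook_mxD N N' : hook_mx N -> hook_mx N' -> hook_mx (N + N').
Proof. by move=> /eqP hN /eqP hN'; rewrite /hook_mx (mulmxDr _ N) mulmxDl hN hN' addr0. Qed.

Lemma hook_mx_corner C : hook_mx (corner C).
Proof. by rewrite /hook_mx !mulmxA mulmxBl mul1mx mul_delta_mx subrr !mul0mx. Qed.

Lemma hook_mxZ c N : hook_mx N -> hook_mx (c *: N).
Proof. by move=> /eqP hN; rewrite /hook_mx -scalemxAr -scalemxAl hN scaler0. Qed.

Lemma hook_mx_col i : hook_mx (delta_mx i ord0).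
Proof. by rewrite /hook_mx -mulmxA mulmxBr mulmx1 mul_delta_mx subrr mulmx0. Qed.

Lemma hook_mx_row j : hook_mx (delta_mx ord_max j).
Proof. by rewrite /hook_mx mulmxBl mul1mx mul_delta_mx subrr mul0mx. Qed.

Lemma hook_mx_decomp N : hook_mx N ->
  N = Plast *m N + N *m Pfirst - corner N.
Proof.
move/eqP; rewrite !mulmxBl !mulmxBr !mul1mx !mulmx1 => /eqP; rewrite subr_eq0 => /eqP hN.
by rewrite -{1}(subrK (N *m Pfirst) N) hN addrAC.
Qed.

Lemma hook_mx_mul N N' : N *m Plast = 0 -> Pfirst *m N' = 0 ->
  hook_mx N -> hook_mx N' -> N *m N' = corner (N *m N').
Proof.
move=> NP0 PN'0 /hook_mx_decomp eN /hook_mx_decomp eN'.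
have e1 : N *m N' = Plast *m (N *m N').
  by rewrite {1}eN mulmxBl mulmxDl -!mulmxA PN'0 !mulmx0 addr0 subr0.
have e2 : N *m N' = N *m N' *m Pfirst.
  by rewrite {1}eN' mulmxBr mulmxDr !mulmxA NP0 !mul0mx add0r subr0.
by rewrite {1}e1 {1}e2 mulmxA.
Qed.

Lemma hook_mx_conj X Y N : X *m Plast = Plast -> Pfirst *m Y = Pfirst ->
  hook_mx N -> hook_mx (X *m N *m Y).
Proof.
move=> XP PY /eqP hN; apply/eqP.
have PP : (1 - Plast) *m Plast = 0 by rewrite mulmxBl mul1mx mul_delta_mx subrr.
have PX : (1 - Plast) *m X = (1 - Plast) *m X *m (1 - Plast).
  by rewrite (mulmxBr _ 1) mulmx1 -mulmxA XP PP subr0.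
have PP' : Pfirst *m (1 - Pfirst) = 0 by rewrite mulmxBr mulmx1 mul_delta_mx subrr.
have YP : Y *m (1 - Pfirst) = (1 - Pfirst) *m Y *m (1 - Pfirst).
  by rewrite (mulmxBl 1 _ Y) mul1mx PY mulmxBl PP' subr0.
have -> : (1 - Plast) *m (X *m N *m Y) *m (1 - Pfirst) =
    (1 - Plast) *m X *m N *m (Y *m (1 - Pfirst)) by rewrite !mulmxA.
rewrite PX YP.
have -> : (1 - Plast) *m X *m (1 - Plast) *m N *m ((1 - Pfirst) *m Y *m (1 - Pfirst)) =
    (1 - Plast) *m X *m ((1 - Plast) *m N *m (1 - Pfirst)) *m Y *m (1 - Pfirst).
  by rewrite !mulmxA.
by rewrite hN mulmx0 !mul0mx.
Qed.

Lemma lower_unitri_sub1_last M : lower_unitri M -> (M - 1) *m Plast = 0.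
Proof. by move=> lowM; rewrite mulmxBl lower_unitri_mul_last // mul1mx subrr. Qed.

Lemma lower_unitri_sub1_first M : lower_unitri M -> Pfirst *m (M - 1) = 0.
Proof. by move=> lowM; rewrite mulmxBr lower_unitri_first_mul // mulmx1 subrr. Qed.

Lemma lower_unitri_mul_corner M C : lower_unitri M -> M *m corner C = corner C.
Proof. by move=> lowM; rewrite !mulmxA lower_unitri_mul_last. Qed.

Lemma corner_mul_lower_unitri M C : lower_unitri M -> corner C *m M = corner C.
Proof. by move=> lowM; rewrite -mulmxA lower_unitri_first_mul. Qed.

Lemma hook_mx_lower_unitriM M M' : lower_unitri M -> lower_unitri M' ->
  hook_mx (M - 1) -> hook_mx (M' - 1) -> hook_mx (M *m M' - 1).
Proof.
move=> lowM lowM' hM hM'.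
have -> : M *m M' - 1 = (M - 1) + (M' - 1) + (M - 1) *m (M' - 1).
  by rewrite mulmxBl !mulmxBr !mulmx1 mul1mx; apply/matrixP => i j; rewrite !mxE; ring.
rewrite (hook_mx_mul (lower_unitri_sub1_last lowM) (lower_unitri_sub1_first lowM') hM hM').
by rewrite hook_mxD ?hook_mx_corner // hook_mxD.
Qed.

Lemma hook_mx_lower_unitri_commute Y Y' : lower_unitri Y -> lower_unitri Y' ->
  hook_mx (Y - 1) -> hook_mx (Y' - 1) ->
  let C := (Y - 1) *m (Y' - 1) - (Y' - 1) *m (Y - 1) in
  Y *m Y' = Y' *m Y *m (1 + corner C).
Proof.
move=> lowY lowY' hY hY' C.
have eC : C = corner C.
  rewrite /C (mulmxBr Plast) (mulmxBl (Plast *m _)).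
  have mulYY' := hook_mx_mul (lower_unitri_sub1_last lowY) (lower_unitri_sub1_first lowY').
  have mulY'Y := hook_mx_mul (lower_unitri_sub1_last lowY') (lower_unitri_sub1_first lowY).
  by rewrite -mulYY' // -mulY'Y.
rewrite mulmxDr mulmx1 lower_unitri_mul_corner ?lower_unitriM // -eC /C.
rewrite !mulmxBl !mulmxBr !mulmx1 !mul1mx.
by apply/matrixP => i j; rewrite !mxE; ring.
Qed.

End Hook.

Lemma GL_mulVmx (R : finComUnitRingType) n (x : {'GL_n.+1[R]}) :
  GLval x^-1%g *m GLval x = 1%:M.
Proof. by rewrite GL_VxE mulVmx ?GL_unitmx. Qed.

Section UnitaryLowerUnitriangular.
Variables (F : finFieldType) (q n : nat).
Hypothesis charF_q : [pchar F].-nat q.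

Definition frob (x : F) := x ^+ q.

Lemma frob_is_nmod_morphism : nmod_morphism frob.
Proof.
split=> [|x y]; last exact: exprDn_pchar.
by rewrite /frob expr0n; case/andP: charF_q => /lt0n_neq0/negPf->.
Qed.

Lemma frob_is_monoid_morphism : monoid_morphism frob.
Proof. by split=> [|x y]; rewrite /frob ?expr1n ?exprMn. Qed.

HB.instance Definition _ := GRing.isNmodMorphism.Build F F frob frob_is_nmod_morphism.
HB.instance Definition _ := GRing.isMonoidMorphism.Build F F frob frob_is_monoid_morphism.

Local Notation J := (skewQ F n.+1).
Local Notation S := (lower_unitri_unitary F q n).
Local Notation Plast := (delta_mx ord_max ord_max : 'M[F]_n.+1).
Local Notation Pfirst := (delta_mx ord0 ord0 : 'M[F]_n.+1).
Local Notation corner C := (Plast *m C *m Pfirst).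
Implicit Types (A B X C : 'M[F]_n.+1) (x y : {'GL_n.+1[F]}).

Lemma unitary_mxE A : unitary_mx q A = ((map_mx frob A)^T *m J *m A == J).
Proof. by []. Qed.

Lemma unitary_mx1 : unitary_mx q (1%:M : 'M[F]_n.+1).
Proof. by rewrite unitary_mxE map_mx1 trmx1 mul1mx mulmx1. Qed.

Lemma unitary_mxM A B : unitary_mx q A -> unitary_mx q B -> unitary_mx q (A *m B).
Proof.
rewrite !unitary_mxE map_mxM trmx_mul => /eqP uA /eqP uB.
have -> : (map_mx frob B)^T *m (map_mx frob A)^T *m J *m (A *m B) =
    (map_mx frob B)^T *m ((map_mx frob A)^T *m J *m A) *m B by rewrite !mulmxA.
by rewrite uA uB.
Qed.

Lemma lower_unitri_unitary_group_set : group_set S.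
Proof.
apply/group_setP; split=> [|x y]; first by rewrite inE GL_1E unitary_mx1 lower_unitri1.
rewrite !inE GL_MxE => /andP[ux lx] /andP[uy ly].
by rewrite unitary_mxM ?lower_unitriM.
Qed.

Canonical lower_unitri_unitary_group := Group lower_unitri_unitary_group_set.

Lemma lower_unitri_unitary_lower x : x \in S -> lower_unitri (GLval x).
Proof. by rewrite inE => /andP[]. Qed.

Definition hook_subgroup : {set {'GL_n.+1[F]}} :=
  [set x in S | hook_mx (GLval x - 1)].

Lemma in_hook_subgroup x :
  (x \in hook_subgroup) = (x \in S) && hook_mx (GLval x - 1).
Proof. by rewrite inE. Qed.

Lemma hook_subgroup_group_set : group_set hook_subgroup.
Proof.
apply/group_setP; split=> [|x y].
  by rewrite in_hook_subgroup group1 GL_1E subrr /hook_mx mulmx0 mul0mx eqxx.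
rewrite !in_hook_subgroup => /andP[Sx hx] /andP[Sy hy]; rewrite groupM //=.
exact: hook_mx_lower_unitriM (lower_unitri_unitary_lower Sx)
  (lower_unitri_unitary_lower Sy) hx hy.
Qed.

Canonical hook_subgroup_group := Group hook_subgroup_group_set.

Lemma hook_subgroup_normal : (hook_subgroup <| S)%g.
Proof.
apply/andP; split; first by apply/subsetP => x; rewrite in_hook_subgroup => /andP[].
apply/subsetP => x Sx; rewrite inE; apply/subsetP => _ /imsetP[z hz ->].
move: hz; rewrite !in_hook_subgroup => /andP[Sz hz]; rewrite groupJ //=.
have -> : GLval (z ^ x)%g - 1 = GLval x^-1%g *m (GLval z - 1) *m GLval x.
  by rewrite conjgE !GL_MxE mulmxBr mulmx1 mulmxBl mulmxA GL_mulVmx.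
have lowx := lower_unitri_unitary_lower Sx.
have lowVx := lower_unitri_unitary_lower (groupVr Sx).
exact: hook_mx_conj (lower_unitri_mul_last lowVx) (lower_unitri_first_mul lowx) hz.
Qed.

Lemma corner_cent x C : GLval x = 1 + corner C -> x \in 'C(S)%g.
Proof.
move=> ex; apply/centP => y Sy; apply: val_inj.
change (GLval x *m GLval y = GLval y *m GLval x); rewrite ex.
have lowy := lower_unitri_unitary_lower Sy.
by rewrite mulmxDl mulmxDr mul1mx mulmx1 lower_unitri_mul_corner ?corner_mul_lower_unitri.
Qed.

Lemma hook_subgroup_comm : ([~: hook_subgroup, hook_subgroup] \subset 'C(S))%g.
Proof.
rewrite gen_subG; apply/subsetP => _ /imset2P[y y' hy hy' ->].
move: hy hy'; rewrite !in_hook_subgroup => /andP[Sy hy] /andP[Sy' hy'].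
have := hook_mx_lower_unitri_commute (lower_unitri_unitary_lower Sy)
  (lower_unitri_unitary_lower Sy') hy hy'.
move: (_ - _) => C eyy'; apply: (corner_cent (C := C)).
rewrite commgEl conjgE !GL_MxE eyy' !mulmxA -(mulmxA _ (GLval y'^-1%g)).
by rewrite !GL_mulVmx mulmx1 GL_mulVmx mul1mx.
Qed.

Hypothesis frobK : involutive frob.
Hypothesis two_neq0 : 2%:R != 0 :> F.

Section HookGenerators.
Variable r : 'I_n.+1.
Hypotheses (r_gt0 : (0 < r)%N) (r_lt_n : (r < n)%N).

(* The corner term makes [1 + hook_gen_mx a] unitary when [r] is the middle index. *)
Definition hook_gen_corner (a : F) : F :=
  if r == rev_ord r then - (a ^+ q.+1 / 2%:R) else 0.

Definition hook_gen_mx (a : F) : 'M[F]_n.+1 :=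
  a *: delta_mx r ord0 - frob a *: delta_mx ord_max (rev_ord r) +
  hook_gen_corner a *: delta_mx ord_max ord0.

Let r_neq0 : (r == ord0) = false. Proof. by rewrite -val_eqE /=; lia. Qed.
Let r_neq_max : (r == ord_max) = false. Proof. by rewrite -val_eqE /=; lia. Qed.
Let rev_r_neq0 : (rev_ord r == ord0) = false. Proof. by rewrite -val_eqE /=; lia. Qed.
Let rev_r_neq_max : (rev_ord r == ord_max) = false. Proof. by rewrite -val_eqE /=; lia. Qed.
Let ord0_neq_max : (ord0 == ord_max :> 'I_n.+1) = false.
Proof. by rewrite -val_eqE /=; lia. Qed.

Lemma hook_gen_mx_strict a (i j : 'I_n.+1) : (i <= j)%N -> hook_gen_mx a i j = 0.
Proof.
move=> le_ij; have delta0 (x y : 'I_n.+1) : (y < x)%N -> (i == x) && (j == y) = false.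
  by move: le_ij; case: eqP => [->|]; case: eqP => [->|] //=; lia.
by rewrite !mxE !delta0 ?mulr0 ?subrr ?addr0 //=; lia.
Qed.

Lemma hook_gen_mx_hook a : hook_mx (hook_gen_mx a).
Proof.
by rewrite /hook_gen_mx -scaleNr !hook_mxD ?hook_mxZ ?hook_mx_col ?hook_mx_row.
Qed.

Lemma trmx_map_hook_gen_mx a : (map_mx frob (hook_gen_mx a))^T =
  frob a *: delta_mx ord0 r - a *: delta_mx (rev_ord r) ord_max +
  frob (hook_gen_corner a) *: delta_mx ord0 ord_max.
Proof.
apply/matrixP => i j; rewrite !mxE rmorphD rmorphB !rmorphM !rmorph_nat /= frobK.
by rewrite !(andbC (j == _)).
Qed.

Lemma frob_hook_gen_corner a : frob (hook_gen_corner a) = hook_gen_corner a.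
Proof.
rewrite /hook_gen_corner; case: ifP => _; rewrite ?rmorph0 //.
rewrite rmorphN fmorph_div rmorph_nat exprS -/(frob a) rmorphM /= frobK.
by rewrite (mulrC (frob a)).
Qed.

Lemma hook_gen_mx_unitary a : unitary_mx q (1 + hook_gen_mx a).
Proof.
rewrite unitary_mxE map_mxD map_mx1 [(_ + _)^T]linearD /= trmx1 trmx_map_hook_gen_mx.
rewrite /hook_gen_mx -!scaleNr !(mulmxDl, mulmxDr) !mul1mx !mulmx1 -!scalemxAl -!scalemxAr.
rewrite !(delta_mul_skewQ, skewQ_mul_delta) !mul_delta_mx_cond rev_ord_max.
rewrite rev_r_neq_max (eq_sym ord0 r) r_neq0 ord0_neq_max frob_hook_gen_corner.
rewrite /hook_gen_corner (eq_sym r) exprS -/(frob a).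
have [_|_] := eqVneq (rev_ord r) r; apply/eqP/matrixP => i j; rewrite ?mulr1n ?mulr0n !mxE.
  by field.
by ring.
Qed.

Definition hook_gen a : {'GL_n.+1[F]} :=
  FinRing.Unit (lower_unitri_unit (lower_unitri_1D (hook_gen_mx_strict a))).

Lemma hook_gen_in_hook_subgroup a : hook_gen a \in hook_subgroup.
Proof.
rewrite in_hook_subgroup inE hook_gen_mx_unitary lower_unitri_1D /=.
  by rewrite (addrC 1) addrK hook_gen_mx_hook.
exact: hook_gen_mx_strict.
Qed.

Lemma hook_gen_mx_commute_col X a : lower_unitri X ->
  X *m (1 + hook_gen_mx a) = (1 + hook_gen_mx a) *m X ->
  [/\ forall i, i != r -> i != ord_max -> a * X i r = 0
    & a * X ord_max r = - frob a * X (rev_ord r) ord0].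
Proof.
move=> lowX; rewrite mulmxDr mulmx1 mulmxDl mul1mx => /addrI eXN.
have {}eXN i : (X *m hook_gen_mx a) i ord0 = (hook_gen_mx a *m X) i ord0 by rewrite eXN.
have X_max i : i != ord_max -> X i ord_max = 0.
  by move=> neq_i; apply: lower_unitri_upper => //; exact: ord_neq_max_lt.
have X00 : X ord0 ord0 = 1 by rewrite lower_unitri_diag.
have XN_col i : (X *m hook_gen_mx a) i ord0 = a * X i r + hook_gen_corner a * X i ord_max.
  rewrite /hook_gen_mx -scaleNr !mulmxDr -!scalemxAr.
  rewrite ![fun_of_matrix (_ + _) _ _]mxE ![fun_of_matrix (_ *: _) _ _]mxE !mul_mx_deltaE.
  by rewrite eqxx (eq_sym ord0) rev_r_neq0 !mulr1 mulr0 mulr0 addr0.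
have NX_col i : (hook_gen_mx a *m X) i ord0 = a * (i == r)%:R -
    frob a * (i == ord_max)%:R * X (rev_ord r) ord0 + hook_gen_corner a * (i == ord_max)%:R.
  rewrite /hook_gen_mx -scaleNr !mulmxDl -!scalemxAl.
  rewrite ![fun_of_matrix (_ + _) _ _]mxE ![fun_of_matrix (_ *: _) _ _]mxE !mul_delta_mxE.
  by rewrite X00 !mulr1 mulNr !mulrA.
split=> [i neq_ir neq_imax | ].
  move: (eXN i); rewrite XN_col NX_col X_max // (negPf neq_ir) (negPf neq_imax).
  by rewrite !mulr0 !mul0r subr0 !addr0.
move: (eXN ord_max).
rewrite XN_col NX_col lower_unitri_diag // eqxx (eq_sym ord_max) r_neq_max.
by rewrite !mulr0 !mulr1 add0r => /addIr ->; rewrite mulNr.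
Qed.

End HookGenerators.

Hypothesis frob_neq_id : exists z, frob z != z.

Lemma commute_hook_gen_mx_entries X (r : 'I_n.+1) : (0 < r < n)%N -> lower_unitri X ->
  (forall a, X *m (1 + hook_gen_mx r a) = (1 + hook_gen_mx r a) *m X) ->
  [/\ forall i, i != r -> i != ord_max -> X i r = 0,
      X ord_max r = 0 & X (rev_ord r) ord0 = 0].
Proof.
case/andP=> r_gt0 r_lt_n lowX cXN; have [z frob_z] := frob_neq_id.
have [X_col X1] := hook_gen_mx_commute_col r_gt0 r_lt_n lowX (cXN 1).
have [_ Xz] := hook_gen_mx_commute_col r_gt0 r_lt_n lowX (cXN z).
rewrite rmorph1 mul1r mulN1r in X1; rewrite X1 mulrN in Xz.
have Xrev0 : X (rev_ord r) ord0 = 0.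
  have : (frob z - z) * X (rev_ord r) ord0 = 0.
    by rewrite mulrBl -[z * _]opprK Xz mulNr opprK subrr.
  by move/eqP; rewrite mulf_eq0 subr_eq0 (negPf frob_z) => /eqP.
split=> [i neq_ir neq_imax | | //]; last by rewrite X1 Xrev0 oppr0.
by rewrite -[X i r]mul1r X_col.
Qed.

Lemma commute_hook_gens_corner X : (0 < n)%N -> lower_unitri X ->
  (forall r : 'I_n.+1, (0 < r < n)%N -> forall a,
     X *m (1 + hook_gen_mx r a) = (1 + hook_gen_mx r a) *m X) ->
  X = 1 + corner X.
Proof.
move=> n_gt0 lowX cX; apply/matrixP => i j.
have entries (r : 'I_n.+1) (r_bounds : (0 < r < n)%N) :=
  commute_hook_gen_mx_entries r_bounds lowX (cX r r_bounds).
rewrite [fun_of_matrix (_ + _) _ _]mxE mul_mx_deltaE mul_delta_mxE !mxE.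
have max_neq0 : (ord_max == ord0 :> 'I_n.+1) = false by rewrite -val_eqE /=; lia.
case: (ltngtP i j) => [lt_ij | lt_ji | /val_inj <-]; last first.
- rewrite lower_unitri_diag // eqxx; have [->|_] := eqVneq i ord_max.
    by rewrite max_neq0 mulr0 addr0.
  by rewrite mul0r mul0r addr0.
- have neq_ij : (i == j) = false by rewrite -val_eqE gtn_eqF.
  rewrite neq_ij add0r; have [-> | j_neq0] := eqVneq j ord0.
    have [-> | /ord_neq_max_lt lt_in] := eqVneq i ord_max; first by rewrite mul1r mulr1.
    have [_ _ X0] := entries (rev_ord i) ltac:(rewrite /= subSS; lia).
    by rewrite rev_ordK in X0; rewrite X0 /= !mul0r.
  have j_bounds : (0 < j < n)%N by rewrite ord_neq0_gt0 //=; have := ltn_ord i; lia.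
  have [Xcol Xmax _] := entries j j_bounds; rewrite mulr0.
  by have [-> | neq_imax] := eqVneq i ord_max; rewrite ?Xmax ?Xcol ?neq_ij.
have j_neq0 : (j == ord0) = false by rewrite -val_eqE /=; lia.
have neq_ij : (i == j) = false by rewrite -val_eqE ltn_eqF.
by rewrite (lower_unitri_upper lowX lt_ij) neq_ij j_neq0 mulr0 addr0.
Qed.

Lemma hook_subgroup_cent : (0 < n)%N -> ('C_S(hook_subgroup) \subset 'C(S))%g.
Proof.
move=> n_gt0; apply/subsetP => x /setIP[Sx /centP cx].
apply: (corner_cent (C := GLval x)).
apply: commute_hook_gens_corner (lower_unitri_unitary_lower Sx) _ => //.
move=> r /andP[r_gt0 r_lt_n] a.
by have := congr1 GLval (cx _ (hook_gen_in_hook_subgroup r_gt0 r_lt_n a)); rewrite !GL_MxE.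
Qed.

End UnitaryLowerUnitriangular.

Lemma finField_exists_expf_neq (F : finFieldType) (q : nat) :
  (1 < q < #|F|)%N -> exists z : F, z ^+ q != z.
Proof.
case/andP=> q_gt1 q_lt_F; have [z neq_z | fixF] := pickP (fun z : F => z ^+ q != z).
  by exists z.
have sizeP : size ('X^q - 'X : {poly F}) = q.+1.
  by rewrite size_polyDl ?size_polyXn // size_polyN size_polyX ltnS.
have nzP : 'X^q - 'X != 0 :> {poly F} by rewrite -size_poly_gt0 sizeP.
have rootsP : all (root ('X^q - 'X)) (enum F).
  by apply/allP => z _; rewrite rootE !hornerE; move/negbFE/eqP: (fixF z) => ->; rewrite subrr.
have := max_poly_roots nzP rootsP (enum_uniq _).
by rewrite -cardE sizeP ltnS leqNgt q_lt_F.
Qed.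

Theorem theorem3p9 (p k m : nat) (F : finFieldType) :
  prime p -> (5 <= p)%N -> (0 < k)%N -> (1 <= m)%N ->
  #|F| = ((p ^ k) ^ 2)%N ->
  is_oliver_subgroup p (lower_unitri_unitary F (p ^ k) (2 * m))
                       (lower_unitri_unitary F (p ^ k) (2 * m)).
Proof.
move=> p_pr p_ge5 k_gt0 m_gt0 cardF; set q := (p ^ k)%N.
have charFp : p \in [pchar F] by apply: (card_finPcharP (n := k * 2)); rewrite ?cardF ?expnM.
have charF_q : [pchar F].-nat q by rewrite (eq_pnat _ (pcharf_eq charFp)) pnatX pnat_id.
have q_gt1 : (1 < q)%N by rewrite -(exp1n k) ltn_exp2r //; lia.
have frobK : involutive (@frob F q) by move=> x; rewrite /frob -exprM mulnn -cardF expf_card.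
have two_neq0 : 2%:R != 0 :> F by rewrite -(dvdn_pcharf charFp); apply/negP => /dvdn_leq; lia.
have frob_neq : exists z : F, frob q z != z.
  by apply: finField_exists_expf_neq; rewrite q_gt1 cardF -mulnn ltn_Pmull // ltnW.
have n_gt0 : (0 < 2 * m)%N by lia.
apply: (@oliver_subgroup_self _ p (lower_unitri_unitary_group (2 * m) charF_q)
          (hook_subgroup_group (2 * m) charF_q)); first by lia.
- exact: hook_subgroup_normal.
- exact: hook_subgroup_comm.
exact: hook_subgroup_cent charF_q frobK two_neq0 frob_neq n_gt0.
Qed.
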